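(* Let $t_j^i=\binom{i}{j}$ for $0\le j\le i$, and let $h_{j,k}^i$ ($0\le k\le i$, $0\le j\le i-k$) be defined by $h_{j,0}^i=t_j^i$ and $h_{j,k}^i=h_{j,k-1}^{i-1}+h_{j,k-1}^{i}+h_{j+1,k-1}^{i}$ for $k\ge 1$. Then for any $0\leq k \leq i$, $0\leq j \leq i-k$, $$h_{j,k}^i=\sum_{\ell=0}^{k}\binom{2\ell+i-k}{\ell+j}\binom{k}{\ell}.$$ *)

From mathcomp Require Import all_boot.
Set Implicit Arguments. Unset Strict Implicit. Unset Printing Implicit Defensive.

Definition t (i j : nat) : nat := 'C(i, j).

(* h i j k = h^i_{j,k}; defined by recursion on k.  The recursion only ever
   refers to in-range indices when (k <= i, j <= i - k); outside that range
   the values are irrelevant. *)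
Fixpoint h (i j k : nat) {struct k} : nat :=
  match k with
  | 0 => t i j
  | k'.+1 => h i.-1 j k' + h i j k' + h i j.+1 k'
  end.

From mathcomp Require Import all_boot.
From mathcomp Require Import zify.

(* Both sides satisfy the same recursion in k and agree at k = 0.  For the
   sum, Pascal's rule on 'C(k.+1, l) splits it into the sum at k plus a
   shifted sum, and Pascal's rule on the upper binomial splits the shifted
   sum into the two remaining terms of the recursion. *)

Lemma sum_mul_binS (a : nat -> nat) (k : nat) :
  \sum_(0 <= l < k.+2) a l * 'C(k.+1, l) =
  \sum_(0 <= l < k.+1) a l * 'C(k, l) + \sum_(0 <= l < k.+1) a l.+1 * 'C(k, l).
Proof.
have sum_binS : a 0 * 1 + \sum_(0 <= l < k.+1) a l.+1 * 'C(k, l.+1) =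
                \sum_(0 <= l < k.+1) a l * 'C(k, l).
  rewrite -(bin0 k) -(big_nat_recl _ _ (fun l => a l * 'C(k, l))) //.
  by rewrite big_nat_recr //= bin_small // muln0 addn0.
rewrite big_nat_recl // bin0.
under eq_bigr do rewrite binS mulnDr.
by rewrite big_split /= addnA sum_binS.
Qed.

Definition hsum (n j k : nat) : nat :=
  \sum_(0 <= l < k.+1) 'C(2 * l + n, l + j) * 'C(k, l).

Lemma hsumS (n j k : nat) :
  hsum n j k.+1 = hsum n j k + hsum n.+1 j k + hsum n.+1 j.+1 k.
Proof.
have shifted : \sum_(0 <= l < k.+1) 'C(2 * l.+1 + n, l.+1 + j) * 'C(k, l) =
               hsum n.+1 j k + hsum n.+1 j.+1 k.
  rewrite /hsum -big_split /=; apply: eq_bigr => l _.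
  have -> : 2 * l.+1 + n = (2 * l + n.+1).+1 by lia.
  by rewrite !addSn binS -(addnS l j) mulnDl [LHS]addnC.
by rewrite /hsum sum_mul_binS shifted addnA.
Qed.

Lemma h_hsum (k i j : nat) : k <= i -> h i j k = hsum (i - k) j k.
Proof.
elim: k i j => [|k IHk] i j le_ki.
  by rewrite /hsum big_nat1 /= /t subn0 bin0 muln1.
have i_pred : i.-1 - k = i - k.+1 by lia.
have i_succ : i - k = (i - k.+1).+1 by lia.
rewrite /= !IHk; [|lia..].
by rewrite i_pred i_succ -hsumS.
Qed.

(* The identity holds for every j. *)
Theorem theorem9 (i j k : nat) (hk : k <= i) (hj : j <= i - k) :
  h i j k = \sum_(0 <= l < k.+1) 'C(2 * l + (i - k), l + j) * 'C(k, l).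
Proof. exact: h_hsum. Qed.
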